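(* The metric space $(\mathcal M_{\mathcal G,\Gamma},\mathrm m_{\mathcal G,\Gamma})$ is separable.
   Context: $(X,\Sigma,\mu)$ is a separable Lebesgue space with a non-atomic probability measure $\mu$. $\mathcal A$ is the group of invertible measure-preserving transformations of $X$, two transformations being identified if they agree outside a null set. Fix a countable family $\{A_i\}_{i\in\mathbb N}\subset\Sigma$ that generates $\Sigma$ and is dense in $\Sigma$ (for every $A\in\Sigma$ and $\varepsilon>0$ there is $i$ with $\mu(A_i\triangle A)<\varepsilon$). For $T,S\in\mathcal A$ put $\mathrm d(T,S)=\sum_{i}2^{-i}\big(\mu(TA_i\triangle SA_i)+\mu(T^{-1}A_i\triangle S^{-1}A_i)\big)$ and $\mathrm a(T,S)=\sum_{i,j}2^{-(i+j)}|\mu(TA_i\cap A_j)-\mu(SA_i\cap A_j)|$. $\mathcal G$ is a Hausdorff locally compact group with a countable neighborhood base, with identity $e$. Fix an at most countable family $\{K_i\}$ of compact subsets of $\mathcal G$ with nonempty interiors whose union contains a set generating $\mathcal G$. An action of $\mathcal G$ is a family $T=\{T^g\}_{g\in\mathcal G}\subset\mathcal A$ with $T^gT^h=T^{gh}$ for all $g,h\in\mathcal G$ and such that $g\mapsto\mu(T^gA\cap B)$ is continuous on $\mathcal G$ for all $A,B\in\Sigma$. $\mathcal A_{\mathcal G}$ is the set of all actions, and $\mathrm d_{\mathcal G}(T,S)=\sum_i 2^{-i}\sup_{g\in K_i}\mathrm d(T^g,S^g)$. Let $\Gamma\subset\mathcal G$ be an unbounded subset (not contained in any compact set). An action $T$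 is $\Gamma$-mixing if for all $A,B\in\Sigma$ and $\varepsilon>0$ there is a compact $C\subset\mathcal G$ with $|\mu(T^gA\cap B)-\mu(A)\mu(B)|<\varepsilon$ for all $g\in\Gamma\setminus C$. $\mathcal M_{\mathcal G,\Gamma}$ is the set of all $\Gamma$-mixing actions of $\mathcal G$, equipped with the (leash) metric $\mathrm m_{\mathcal G,\Gamma}(T,S)=\mathrm d_{\mathcal G}(T,S)+\sup_{g\in\Gamma}\mathrm a(T^g,S^g)$. *)

From HB Require Import structures.
From mathcomp Require Import all_boot all_order all_algebra.
From mathcomp Require Import all_classical all_reals all_analysis.
Import Order.TTheory GRing.Theory Num.Theory.
Import numFieldNormedType.Exports.

Set Implicit Arguments.
Unset Strict Implicit.
Unset Printing Implicit Defensive.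

Local Open Scope classical_set_scope.
Local Open Scope ring_scope.

Section MeasureSide.
Context {d : measure_display} {X : measurableType d} {R : realType}.
Variable mu : {measure set X -> \bar R}.

Definition symdiff (A B : set X) : set X := (A `\` B) `|` (B `\` A).

(* (X, Sigma, mu) is a (separable) Lebesgue space with non-atomic
   probability measure: it is isomorphic mod 0 to [0,1] with Lebesgue
   measure.  phi : X -> R pushes mu to Lebesgue measure on [0,1] and has a
   measurable inverse psi mod 0. *)
Definition nonatomic_lebesgue_space : Prop :=
  exists (phi : X -> R) (psi : R -> X),
    [/\ measurable_fun setT phi, measurable_fun setT psi,
        {ae mu, forall x, psi (phi x) = x} &
        forall B : set R, measurable B ->
          mu (phi @^-1` B) = lebesgue_measure (B `&` `[0%R, 1%R]) ].

Definition measure_preserving (T : X -> X) : Prop :=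
  measurable_fun setT T /\ forall B, measurable B -> mu (T @^-1` B) = mu B.

Record inv_map := InvMap { fwd : X -> X ; bwd : X -> X }.

(* t represents an invertible measure-preserving transformation of X
   (mod null sets): fwd t is the transformation, bwd t its inverse mod 0. *)
Definition in_Aut (t : inv_map) : Prop :=
  [/\ measure_preserving (fwd t), measure_preserving (bwd t),
      {ae mu, forall x, bwd t (fwd t x) = x} &
      {ae mu, forall x, fwd t (bwd t x) = x} ].

(* image T A (= preimage of A under T^{-1}) and preimage T^{-1} A *)
Definition img (t : inv_map) (A : set X) : set X := bwd t @^-1` A.
Definition preimg (t : inv_map) (A : set X) : set X := fwd t @^-1` A.

Variable A : nat -> set X.

Definition dist_d (t s : inv_map) : \bar R :=
  \esum_(i in [set: nat])
    ((((2%:R)^-1) ^+ i)%:E *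
      (mu (symdiff (img t (A i)) (img s (A i))) +
       mu (symdiff (preimg t (A i)) (preimg s (A i)))))%E.

Definition dist_a (t s : inv_map) : \bar R :=
  \esum_(ij in [set: nat * nat])
    ((((2%:R)^-1) ^+ (ij.1 + ij.2))%:E *
      `| mu (img t (A ij.1) `&` A ij.2) - mu (img s (A ij.1) `&` A ij.2) |)%E.

End MeasureSide.
Arguments inv_map {d} X.

Section GroupSide.
Context {G : topologicalType}.
Variables (mul : G -> G -> G) (inv : G -> G) (e : G).

Definition lc_group : Prop :=
  [/\ (forall x y z, mul x (mul y z) = mul (mul x y) z),
      (forall x, mul e x = x /\ mul x e = x) &
      (forall x, mul (inv x) x = e /\ mul x (inv x) = e) ] /\
  [/\ continuous (fun p : G * G => mul p.1 p.2),
      continuous inv,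
      hausdorff_space G,
      locally_compact [set: G] &
      exists U : nat -> set G,
        (forall n, nbhs e (U n)) /\
        (forall V, nbhs e V -> exists n, U n `<=` V) ].

Definition generates (S : set G) : Prop :=
  forall H : set G, H e -> (forall x y, H x -> H y -> H (mul x (inv y))) ->
    S `<=` H -> H = setT.

Context {d : measure_display} {X : measurableType d} {R : realType}.
Variable mu : {measure set X -> \bar R}.

Definition is_action (T : G -> inv_map X) : Prop :=
  [/\ (forall g, in_Aut mu (T g)),
      (forall g h, {ae mu, forall x,
           fwd (T g) (fwd (T h) x) = fwd (T (mul g h)) x}) &
      (forall A B : set X, measurable A -> measurable B ->
         continuous (fun g => fine (mu (img (T g) A `&` B)))) ].

Variable Gam : set G.

Definition is_mixing (T : G -> inv_map X) : Prop :=
  is_action T /\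
  forall A B : set X, measurable A -> measurable B ->
  forall eps : R, 0 < eps ->
  exists C : set G, compact C /\
    forall g, Gam g -> ~ C g ->
      `| fine (mu (img (T g) A `&` B)) - fine (mu A) * fine (mu B) | < eps.

Variables (Aset : nat -> set X) (I : set nat) (K : nat -> set G).

Definition dist_dG (T S : G -> inv_map X) : \bar R :=
  \esum_(i in I) ((((2%:R)^-1) ^+ i)%:E *
     ereal_sup [set dist_d mu Aset (T g) (S g) | g in K i])%E.

Definition dist_m (T S : G -> inv_map X) : \bar R :=
  (dist_dG T S + ereal_sup [set dist_a mu Aset (T g) (S g) | g in Gam])%E.

End GroupSide.

(* G is second countable: the translates of its countable base [U n] at
   [e] by words in the centres of finite covers of the compact sets [K i]
   by translates of [U n] form a countable basis.  A pattern of level [k]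
   is a finite list of basic open sets, each labelled by indices of sets
   [A _] that approximate within [2^-k] the images and preimages of
   [A 0], ..., [A (k-1)] under [T g] for every [g] in that set.  By
   continuity of the action and compactness, every mixing action fits, at
   every level [k], some pattern that covers [K 0], ..., [K (k-1)] and off
   which the mixing estimates for [A 0], ..., [A (k-1)] hold within [2^-k];
   two actions fitting the same pattern are [52 * 2^-k]-close in the leash
   metric.  Choosing one mixing action per pattern gives a countable dense
   set. *)

From HB Require Import structures.
From mathcomp Require Import all_boot all_order all_algebra.
From mathcomp Require Import all_classical all_reals all_analysis.
From mathcomp Require Import ring lra finmap.
Import Order.TTheory GRing.Theory Num.Theory.
Import numFieldNormedType.Exports.

Set Implicit Arguments.
Unset Strict Implicit.
Unset Printing Implicit Defensive.
Local Open Scope classical_set_scope.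
Local Open Scope ring_scope.

Section HalfPowers.
Variable R : realType.

Definition half_pow (i : nat) : R := 2^-1 ^+ i.

Lemma half_pow_gt0 i : 0 < half_pow i.
Proof. by rewrite exprn_gt0 // invr_gt0. Qed.

Lemma half_pow_ge0 i : 0 <= half_pow i.
Proof. exact/ltW/half_pow_gt0. Qed.

Lemma half_pow_le1 i : half_pow i <= 1.
Proof. by rewrite exprn_ile1 // ?invr_ge0 // invf_le1 // ler1n. Qed.

Lemma half_pow0 : half_pow 0 = 1.
Proof. exact: expr0. Qed.

Lemma half_powS i : half_pow i.+1 = half_pow i / 2.
Proof. exact: exprSr. Qed.

Lemma half_powD i j : half_pow (i + j) = half_pow i * half_pow j.
Proof. exact: exprD. Qed.

Lemma sum_half_pow M : \sum_(0 <= i < M) half_pow i = 2 - 2 * half_pow M.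
Proof.
elim: M => [|M IH]; first by rewrite big_geq // half_pow0; lra.
by rewrite big_nat_recr //= IH half_powS; lra.
Qed.

Lemma sum_half_pow_from N M :
  \sum_(0 <= i < M) (if (N <= i)%N then half_pow i else 0) =
  2 * half_pow N - 2 * half_pow (maxn N M).
Proof.
elim: M => [|M IH]; first by rewrite big_geq // maxn0; lra.
rewrite big_nat_recr //= IH; case: leqP => [NM|MN].
  by rewrite (maxn_idPr (leqW NM)) half_powS; lra.
by rewrite (maxn_idPl MN); lra.
Qed.

Lemma half_pow_small eps : 0 < eps -> exists k, half_pow k < eps.
Proof.
move=> eps0; have : `|2^-1 : R| < 1 by rewrite ger0_norm ?invf_lt1 ?ltr1n.
move=> /cvg_expr /cvgr0_norm_lt /(_ eps eps0) [k _ hk]; exists k.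
by have := hk k (leqnn k); rewrite ger0_norm ?half_pow_ge0.
Qed.

Lemma esum_half_pow_le (S : set nat) (f : nat -> \bar R) (s b : R) N :
  0 <= s -> 0 <= b ->
  (forall i, S i -> (f i <= (half_pow i * b)%:E)%E) ->
  (forall i, S i -> (i < N)%N -> (f i <= (half_pow i * s)%:E)%E) ->
  (\esum_(i in S) f i <= (2 * s + 2 * b * half_pow N)%:E)%E.
Proof.
move=> s0 b0 fb fs; apply: ge_ereal_sup => _ [F [finF FS] <-].
rewrite fsbig_finite //=.
pose y i := if (i < N)%N then s else b.
apply: (@le_trans _ _ (\sum_(i <- fset_set F) (half_pow i * y i)%:E)%E).
  rewrite big_seq [leRHS]big_seq; apply: lee_sum => i.
  rewrite in_fset_set // => /set_mem /FS Si; rewrite /y.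
  by case: ifP => [/(fs _ Si)|_]; last exact: fb.
pose n := (\max_(k <- fset_set F) k).+1.
apply: (le_trans (lee_sum_fset_nat (fset_set F) n xpredT _ _)).
- by move=> i _; rewrite lee_fin mulr_ge0 ?half_pow_ge0 // /y; case: ifP.
- move=> k /= kF; rewrite /n big_seq_fsetE/=.
  by rewrite -[k]/(val [`kF]%fset) ltnS leq_bigmax.
rewrite sumEFin lee_fin.
apply: (@le_trans _ _ (\sum_(0 <= i < n)
   (half_pow i * s + (if (N <= i)%N then half_pow i else 0) * b))).
  apply: ler_sum => i _; rewrite /y; case: (ltnP i N) => _.
    by rewrite mul0r addr0.
  by rewrite ler_wpDl // mulr_ge0 ?half_pow_ge0.
rewrite big_split /= -!mulr_suml sum_half_pow sum_half_pow_from.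
by have := half_pow_ge0 n; have := half_pow_ge0 (maxn N n); nra.
Qed.

Lemma esum_half_pow2_le (x : nat -> nat -> R) N c : 0 <= c ->
  (forall i j, 0 <= x i j <= 1) -> (forall i j, (i < N)%N -> (j < N)%N -> x i j <= c) ->
  (\esum_(ij in [set: nat * nat]) (half_pow (ij.1 + ij.2) * x ij.1 ij.2)%:E <=
   (4 * c + 12 * half_pow N)%:E)%E.
Proof.
move=> c0 x01 xc.
have x0 i j : 0 <= x i j by case/andP: (x01 i j).
have x1 i j : x i j <= 1 by case/andP: (x01 i j).
have -> : [set: nat * nat] = [set: nat] `*`` (fun=> [set: nat]).
  by apply/seteqP; split => -[i j].
rewrite -(esum_esum (a := fun i j => (half_pow (i + j) * x i j)%:E)); last first.
  by move=> i j _ _; rewrite lee_fin mulr_ge0 ?half_pow_ge0.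
under eq_esum do under eq_esum do rewrite half_powD -mulrA mulrCA.
have wN0 := half_pow_ge0 N; have wN1 := half_pow_le1 N.
apply: le_trans (@esum_half_pow_le _ _ (2 * c + 2 * half_pow N) 4 N _ _ _ _) _.
- lra.
- by [].
- move=> i _.
  apply: le_trans (@esum_half_pow_le _ _ (half_pow i) (half_pow i) N _ _ _ _) _.
  + exact: half_pow_ge0.
  + exact: half_pow_ge0.
  + by move=> j _; rewrite lee_fin ler_wpM2l ?half_pow_ge0 // ler_piMr ?half_pow_ge0.
  + by move=> j _ _; rewrite lee_fin ler_wpM2l ?half_pow_ge0 // ler_piMr ?half_pow_ge0.
  + by rewrite lee_fin; have := half_pow_ge0 i; nra.
- move=> i _ iN.
  apply: le_trans (@esum_half_pow_le _ _ (half_pow i * c) (half_pow i) N _ _ _ _) _.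
  + by rewrite mulr_ge0 ?half_pow_ge0.
  + exact: half_pow_ge0.
  + by move=> j _; rewrite lee_fin ler_wpM2l ?half_pow_ge0 // ler_piMr ?half_pow_ge0.
  + by move=> j _ jN; rewrite lee_fin !ler_wpM2l ?half_pow_ge0 ?xc.
  + by rewrite lee_fin le_eqVlt; apply/orP; left; apply/eqP; ring.
- by rewrite lee_fin; lra.
Qed.

End HalfPowers.

Lemma compact_finite_subcover (T : topologicalType) (J : eqType) (C : set T)
    (P : set J) (b : J -> set T) :
  compact C -> (forall j, open (b j)) -> C `<=` \bigcup_(j in P) b j ->
  exists2 s : seq J, {subset s <= P} & C `<=` \bigcup_(j in [set` s]) b j.
Proof.
move=> /compact_near_coveringP cC ob Cb.
pose F : set_system (seq J) := [set Q | exists2 t : seq J, {subset t <= P} &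
   forall s : seq J, {subset t <= s} -> {subset s <= P} -> Q s].
have FF : Filter F.
  split; first by exists [::].
  - move=> Q1 Q2 [t1 P1 h1] [t2 P2 h2]; exists (t1 ++ t2).
      by move=> j; rewrite mem_cat => /orP[/P1|/P2].
    move=> s ts sP; split; [apply: h1|apply: h2] => // j jt;
      by apply: ts; rewrite mem_cat jt ?orbT.
  - by move=> Q1 Q2 Q12 [t tP h]; exists t => // s ts sP; apply/Q12/h.
have [x Cx|t tP h] := cC _ F (fun s x => exists2 j, j \in s & b j x) FF.
  have [j Pj bjx] := Cb x Cx.
  exists (b j, [set s : seq J | j \in s]) => /=; last first.
    by move=> [y s] /= [bjy js]; exists j.
  split; first by apply: open_nbhs_nbhs.
  exists [:: j]; first by move=> i; rewrite inE => /eqP ->; exact: mem_set.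
  by move=> s js _; apply: js; rewrite inE.
by exists t => // x /(h t (fun j => id) tP) [j jt bjx]; exists j.
Qed.

Section TopologicalGroup.
Context {G : topologicalType} {mul : G -> G -> G} {inv : G -> G} {e : G}.
Hypothesis HG : lc_group mul inv e.

Lemma mulGA x y z : mul x (mul y z) = mul (mul x y) z.
Proof. by case: HG => -[]. Qed.
Lemma mul1G x : mul e x = x.
Proof. by case: HG => -[_ /(_ x) []]. Qed.
Lemma mulG1 x : mul x e = x.
Proof. by case: HG => -[_ /(_ x) []]. Qed.
Lemma mulVG x : mul (inv x) x = e.
Proof. by case: HG => -[_ _ /(_ x) []]. Qed.
Lemma mulGV x : mul x (inv x) = e.
Proof. by case: HG => -[_ _ /(_ x) []]. Qed.
Lemma mulKG x z : mul (inv x) (mul x z) = z.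
Proof. by rewrite mulGA mulVG mul1G. Qed.
Lemma mulKVG x z : mul x (mul (inv x) z) = z.
Proof. by rewrite mulGA mulGV mul1G. Qed.
Lemma invG_uniq x y : mul x y = e -> y = inv x.
Proof. by move=> xy; rewrite -(mulKG x y) xy mulG1. Qed.
Lemma invGK x : inv (inv x) = x.
Proof. by apply/esym/invG_uniq; rewrite mulVG. Qed.
Lemma invGM x y : inv (mul x y) = mul (inv y) (inv x).
Proof. by apply/esym/invG_uniq; rewrite -mulGA (mulGA y) mulGV mul1G mulGV. Qed.
Lemma invG1 : inv e = e.
Proof. by apply/esym/invG_uniq; rewrite mulG1. Qed.

Lemma continuousM_at (T : topologicalType) (f g : T -> G) x :
  {for x, continuous f} -> {for x, continuous g} ->
  {for x, continuous (fun t => mul (f t) (g t))}.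
Proof.
move=> cf cg; case: HG => _ [cmul _ _ _ _].
exact: (continuous_comp (cvg_pair cf cg) (cmul (f x, g x))).
Qed.

Lemma continuousV_at (T : topologicalType) (f : T -> G) x :
  {for x, continuous f} -> {for x, continuous (fun t => inv (f t))}.
Proof. by case: HG => _ [_ cinv _ _ _] cf; exact: (continuous_comp cf (cinv (f x))). Qed.

Lemma nbhs1_inv V : nbhs e V -> nbhs e [set z | V (inv z)].
Proof.
have := continuousV_at (@cvg_id _ (nbhs e)).
by rewrite /prop_for /continuous_at /= invG1; apply.
Qed.

Lemma nbhs1_translate y O : nbhs y O -> nbhs e [set z | O (mul y z)].
Proof.
have := continuousM_at (@cst_continuous _ _ y e) (@cvg_id _ (nbhs e)).
by rewrite /prop_for /continuous_at /= mulG1; apply.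
Qed.

Lemma open_translate a O : open O -> open [set z | O (mul a z)].
Proof.
move=> oO; apply: (open_comp (f := mul a)) => // x _.
exact: continuousM_at (@cst_continuous _ _ a x) (@cvg_id _ (nbhs x)).
Qed.

Lemma compact_translates_cover C V : compact C -> open V -> V e ->
  exists s : seq G, C `<=` \bigcup_(x in [set` s]) [set z | V (mul (inv x) z)].
Proof.
move=> cC oV Ve; have [|s _ Cs] := @compact_finite_subcover G G C setT
    (fun x => [set z | V (mul (inv x) z)]) cC (fun x => open_translate _ oV).
  by move=> y _; exists y => //=; rewrite mulVG.
by exists s.
Qed.

Section Words.
Variables (L : Type) (q : L -> G).

(* [(true, l)] stands for the letter [q l] and [(false, l)] for [inv (q l)]. *)
Fixpoint word_eval (w : seq (bool * L)) : G :=
  if w is p :: w' then mul (if p.1 then q p.2 else inv (q p.2)) (word_eval w') else e.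

Definition word_inv (w : seq (bool * L)) := rev [seq (~~ p.1, p.2) | p <- w].

Lemma word_eval_cat w1 w2 : word_eval (w1 ++ w2) = mul (word_eval w1) (word_eval w2).
Proof. by elim: w1 => [|p w IH] /=; rewrite ?mul1G // IH mulGA. Qed.

Lemma word_eval_inv w : word_eval (word_inv w) = inv (word_eval w).
Proof.
elim: w => [|[[] l] w IH]; rewrite /= ?invG1 //;
  by rewrite /word_inv map_cons rev_cons -cats1 word_eval_cat IH /= mulG1 invGM ?invGK.
Qed.

End Words.

(* The words in centres of finite covers of each [K i] by translates of
   [U n] are dense: their closure contains [K i] and is a subgroup. *)
Lemma generated_dense_words (I : set nat) (K : nat -> set G) :
  (forall i, I i -> compact (K i)) -> generates mul inv e (\bigcup_(i in I) K i) ->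
  exists q : nat * nat * nat -> G, closure (range (word_eval q)) = setT.
Proof.
move=> cK genK; have [_ [_ _ _ _ [U [Ue Ubase]]]] := HG.
have centres (p : nat * nat) : exists s : seq G, I p.1 ->
    K p.1 `<=` \bigcup_(x in [set` s]) [set z | (U p.2)° (mul (inv x) z)].
  have [Ip|] := pselect (I p.1); last by exists [::].
  have [s Ks] := compact_translates_cover (cK _ Ip) (@open_interior _ (U p.2))
    (nbhs_singleton (nbhs_interior (Ue p.2))).
  by exists s.
have [s sK] := choice centres; pose q t := nth e (s t.1) t.2.
exists q; apply: genK.
- by apply: subset_closure; exists [::].
- move=> x y clx cly O xyO.
  have cxy : {for (x, y), continuous (fun p : G * G => mul p.1 (inv p.2))}.
    by apply: continuousM_at; [exact: cvg_fst|apply: continuousV_at; exact: cvg_snd].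
  have [[A1 A2] /= [xA1 yA2] A12] := cxy _ xyO.
  have [_ [[w1 _ <-] A1w1]] := clx _ xA1; have [_ [[w2 _ <-] A2w2]] := cly _ yA2.
  exists (word_eval q (w1 ++ word_inv w2)); split; first by exists (w1 ++ word_inv w2).
  by rewrite word_eval_cat word_eval_inv; exact: (A12 (_, _)).
- move=> y [i Ii Kiy] O yO; have [n Un] := Ubase _ (nbhs1_inv (nbhs1_translate yO)).
  have [x xs Uxy] := sK (i, n) Ii y Kiy; exists x; split.
    by exists [:: (true, (i, n, index x (s (i, n))))]; rewrite //= /q nth_index // mulG1.
  by move: (Un _ (interior_subset Uxy)) => /=; rewrite invGM invGK mulKVG.
Qed.

(* The basis: translates of the countable base at [e] by the dense points. *)
Lemma dense_countable_basis (W : Type) (q : W -> G) : closure (range q) = setT ->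
  exists b : W * nat -> set G, (forall j, open (b j)) /\
    forall y O, nbhs y O -> exists j, b j y /\ b j `<=` O.
Proof.
move=> qdense; have [_ [_ _ _ _ [U [Ue Ubase]]]] := HG.
exists (fun j => [set z | (U j.2)° (mul (inv (q j.1)) z)]); split.
  by move=> j; apply: open_translate; exact: open_interior.
move=> y O yO.
have cps : {for (e, e), continuous (fun p : G * G => mul y (mul p.1 p.2))}.
  apply: continuousM_at; first exact: cst_continuous.
  by apply: continuousM_at; [exact: cvg_fst|exact: cvg_snd].
have := cps O; rewrite /= !mulG1 => /(_ yO) [[V1 V2] /= [eV1 eV2] V12].
have [n Un] := Ubase _ (filterI eV1 eV2).
have eZ : nbhs e ((U n)° `&` [set z | (V1 `&` V2) (inv z)]).
  by apply: filterI; [exact: nbhs_interior|exact: nbhs1_inv (filterI eV1 eV2)].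
have cq : {for y, continuous (fun x => mul (inv x) y)}.
  by apply: continuousM_at; [apply: continuousV_at; exact: cvg_id|exact: cst_continuous].
have := cq _; rewrite /continuous_at mulVG => /(_ _ eZ) yq.
have : closure (range q) y by rewrite qdense.
move=> /(_ _ yq) [_ [[w _ <-] [Uw Vw]]].
exists (w, n); split => //= z Uz.
(* [z = y * (inv (q w) * y)^-1 * (inv (q w) * z)] lies in [y * V1 * V2]. *)
have := V12 (inv (mul (inv (q w)) y), mul (inv (q w)) z) => /=.
rewrite invGM invGK -mulGA mulKVG mulKVG; apply; split.
  by move: Vw; rewrite /= invGM invGK => -[].
by have [] := Un _ (interior_subset Uz).
Qed.

End TopologicalGroup.

Section ProbabilityOfSets.
Context {R : realType} {d : measure_display} {X : measurableType d}.
Variable mu : probability X R.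
Implicit Types U V W N : set X.

Definition fmu U : R := fine (mu U).

Lemma fmuE U : measurable U -> (mu : {measure set X -> \bar R}) U = (fmu U)%:E.
Proof. by move=> mU; rewrite /fmu fineK // fin_num_measure. Qed.

Lemma fmu_ge0 U : 0 <= fmu U.
Proof. by rewrite fine_ge0 // measure_ge0. Qed.

Lemma fmu_le1 U : measurable U -> fmu U <= 1.
Proof. by move=> mU; rewrite -lee_fin -fmuE // probability_le1. Qed.

Lemma le_fmu U V : measurable U -> measurable V -> U `<=` V -> fmu U <= fmu V.
Proof.
by move=> mU mV UV; rewrite -lee_fin -!fmuE //; apply: le_measure => //; exact: mem_set.
Qed.

Lemma fmuU_le U V : measurable U -> measurable V -> fmu (U `|` V) <= fmu U + fmu V.
Proof.
by move=> mU mV; rewrite -lee_fin EFinD -!fmuE //; [exact: measureU2|exact: measurableU].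
Qed.

Lemma fmuDI U V : measurable U -> measurable V -> fmu U = fmu (U `\` V) + fmu (U `&` V).
Proof.
move=> mU mV; apply/eqP; rewrite -(@eqe R) EFinD -!fmuE //;
  [exact/eqP/measureDI|exact: measurableI|exact: measurableD].
Qed.

Lemma symdiffC U V : symdiff U V = symdiff V U.
Proof. by rewrite /symdiff setUC. Qed.

Lemma measurable_symdiff U V : measurable U -> measurable V -> measurable (symdiff U V).
Proof. by move=> mU mV; apply: measurableU; apply: measurableD. Qed.

Lemma fmu_symdiff_le U V : measurable U -> measurable V ->
  fmu (symdiff U V) <= fmu (U `\` V) + fmu (V `\` U).
Proof. by move=> mU mV; apply: fmuU_le; apply: measurableD. Qed.

Lemma fmu_symdiff_trans U V W : measurable U -> measurable V -> measurable W ->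
  fmu (symdiff U W) <= fmu (symdiff U V) + fmu (symdiff V W).
Proof.
move=> mU mV mW; have mUV := measurable_symdiff mU mV; have mVW := measurable_symdiff mV mW.
apply: le_trans (fmuU_le mUV mVW); apply: le_fmu.
- exact: measurable_symdiff.
- exact: measurableU.
by move=> x; rewrite /symdiff /=; case: (pselect (V x)); tauto.
Qed.

Lemma fmuI_symdiff U V W : measurable U -> measurable V -> measurable W ->
  `| fmu (U `&` W) - fmu (V `&` W) | <= fmu (symdiff U V).
Proof.
move=> mU mV mW.
suff le U' V' : measurable U' -> measurable V' ->
    fmu (U' `&` W) <= fmu (V' `&` W) + fmu (symdiff U' V').
  by have := le _ _ mU mV; have := le _ _ mV mU; rewrite symdiffC ler_norml; lra.
move=> mU' mV'; have mVW : measurable (V' `&` W) by exact: measurableI.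
apply: le_trans (fmuU_le mVW (measurable_symdiff mU' mV')).
apply: le_fmu; [exact: measurableI|exact/measurableU/measurable_symdiff|].
by move=> x [U'x Wx]; rewrite /symdiff /=; case: (pselect (V' x)); tauto.
Qed.

Lemma measure_eq_mod_null U V N : measurable U -> measurable V -> measurable N ->
  mu N = 0%E -> U `<=` V `|` N -> V `<=` U `|` N -> mu U = mu V.
Proof.
suff le U' V' : measurable U' -> measurable V' -> measurable N -> mu N = 0%E ->
    U' `<=` V' `|` N -> (mu U' <= mu V')%E.
  by move=> mU mV mN N0 UV VU; apply/eqP; rewrite eq_le !le.
move=> mU' mV' mN N0 UV; have mVN : measurable (V' `|` N) by exact: measurableU.
apply: le_trans (le_measure _ (mem_set mU') (mem_set mVN) UV) _.
apply: le_trans (measureU2 mu mV' mN) _; rewrite -[leRHS]adde0 leeD //.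
by rewrite le_eqVlt; apply/orP; left; apply/eqP; exact: N0.
Qed.

Section Automorphism.
Variable t : inv_map X.
Hypothesis ht : in_Aut mu t.

Lemma measurable_img U : measurable U -> measurable (img t U).
Proof. by case: ht => _ [mb _] _ _ mU; rewrite -[img _ _]setTI; exact: mb. Qed.

Lemma measurable_preimg U : measurable U -> measurable (preimg t U).
Proof. by case: ht => [[mf _] _ _ _ mU]; rewrite -[preimg _ _]setTI; exact: mf. Qed.

Lemma fmu_img U : measurable U -> fmu (img t U) = fmu U.
Proof. by case: ht => _ [_ pb] _ _ mU; rewrite /fmu pb. Qed.

Lemma fmu_preimg U : measurable U -> fmu (preimg t U) = fmu U.
Proof. by case: ht => [[_ pf] _ _ _ mU]; rewrite /fmu pf. Qed.

(* [mu (t^-1 U `&` V) = mu (U `&` t V)]: apply [t] to the left-hand side,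
   using that [bwd t \o fwd t] is the identity off a null set. *)
Lemma mu_preimgI U V : measurable U -> measurable V ->
  mu (preimg t U `&` V) = mu (U `&` img t V).
Proof.
move=> mU mV; have mIV := measurable_img mV.
case: ht => [[mf pf] _ [N [mN N0 sN]] _].
rewrite -[RHS]pf; last exact: measurableI.
have bf x : ~ N x -> bwd t (fwd t x) = x by move=> Nx; apply: contrapT => /sN.
apply: (measure_eq_mod_null _ _ mN N0).
- by apply: measurableI => //; exact: measurable_preimg.
- by rewrite -[_ @^-1` _]setTI; apply: mf => //; exact: measurableI.
- move=> x [Ux Vx]; have [|/bf fx] := pselect (N x); [by right|left].
  by rewrite /img /= fx.
- move=> x [Ux Vx]; have [|/bf fx] := pselect (N x); [by right|left].
  by move: Vx; rewrite /img /= fx.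
Qed.

Lemma fmu_preimgI U V : measurable U -> measurable V ->
  fmu (preimg t U `&` V) = fmu (U `&` img t V).
Proof. by move=> mU mV; rewrite /fmu mu_preimgI. Qed.

End Automorphism.
End ProbabilityOfSets.

Section ContinuousActions.
Context {R : realType} {d : measure_display} {X : measurableType d}.
Variable mu : probability X R.
Context {G : topologicalType}.
Local Notation fmu := (fmu mu).

(* If [F g] has constant measure, continuity of [fmu (F g `&` F y)] at [y]
   forces [fmu (F g `\` F y)] and [fmu (F y `\` F g)] to vanish near [y]. *)
Lemma near_symdiff_of_continuous (F : G -> set X) (c : R) :
  (forall g, measurable (F g)) -> (forall g, fmu (F g) = c) ->
  (forall B, measurable B -> continuous (fun g => fmu (F g `&` B))) ->
  forall y (eps : R), 0 < eps -> \forall g \near y, fmu (symdiff (F g) (F y)) < eps.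
Proof.
move=> mF cF Fcont y eps eps0; have eps20 : 0 < eps / 2 by rewrite divr_gt0.
near=> g.
have : `|fmu (F y `&` F y) - fmu (F g `&` F y)| < eps / 2.
  by near: g; exact: cvgr_dist_lt (Fcont _ (mF y) y) _ eps20.
rewrite setIid cF ltr_norml => /andP[lo hi].
apply: le_lt_trans (fmu_symdiff_le mu (mF g) (mF y)) _.
have := fmuDI mu (mF g) (mF y); have := fmuDI mu (mF y) (mF g).
by rewrite setIC !cF; lra.
Unshelve. all: by end_near.
Qed.

Variable mul : G -> G -> G.
Variable T : G -> inv_map X.
Hypothesis hT : is_action mul mu T.

Lemma action_in_Aut g : in_Aut mu (T g).
Proof. by case: hT. Qed.

Lemma near_img_symdiff (U : set X) : measurable U ->
  forall y (eps : R), 0 < eps ->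
  \forall g \near y, fmu (symdiff (img (T g) U) (img (T y) U)) < eps.
Proof.
move=> mU; apply: (@near_symdiff_of_continuous (fun g => img (T g) U) (fmu U)).
- by move=> g; exact (measurable_img (action_in_Aut g) mU).
- by move=> g; rewrite (fmu_img (action_in_Aut g)).
- by move=> B mB; case: hT => _ _; exact.
Qed.

Lemma near_preimg_symdiff (U : set X) : measurable U ->
  forall y (eps : R), 0 < eps ->
  \forall g \near y, fmu (symdiff (preimg (T g) U) (preimg (T y) U)) < eps.
Proof.
move=> mU; apply: (@near_symdiff_of_continuous (fun g => preimg (T g) U) (fmu U)).
- by move=> g; exact (measurable_preimg (action_in_Aut g) mU).
- by move=> g; rewrite (fmu_preimg (action_in_Aut g)).
move=> B mB.
have -> : (fun g => fmu (preimg (T g) U `&` B)) = fun g => fmu (img (T g) B `&` U).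
  by apply: funext => g; rewrite (fmu_preimgI (action_in_Aut g)) // setIC.
by case: hT => _ _; exact.
Qed.

End ContinuousActions.

Section DenseFamily.
Context {R : realType} {d : measure_display} {X : measurableType d}.
Variable mu : probability X R.
Local Notation fmu := (fmu mu).
Variable A : nat -> set X.
Hypothesis mA : forall i, measurable (A i).
Hypothesis Adense : forall B : set X, measurable B -> forall eps : R, 0 < eps ->
  exists i, (mu (symdiff (A i) B) < eps%:E)%E.

Lemma dense_approx (B : set X) eps : measurable B -> 0 < eps ->
  exists j, fmu (symdiff B (A j)) < eps.
Proof.
move=> mB eps0; have [j Aj] := Adense mB eps0; exists j.
by rewrite symdiffC -lte_fin -fmuE //; exact: measurable_symdiff.
Qed.

Definition pair_approx (eps : R) (t : inv_map X) (l : nat) (jj : nat * nat) :=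
  fmu (symdiff (img t (A l)) (A jj.1)) < eps /\
  fmu (symdiff (preimg t (A l)) (A jj.2)) < eps.

Lemma pair_approx_close eps t s l jj : in_Aut mu t -> in_Aut mu s ->
  pair_approx eps t l jj -> pair_approx eps s l jj ->
  fmu (symdiff (img t (A l)) (img s (A l))) < 2 * eps /\
  fmu (symdiff (preimg t (A l)) (preimg s (A l))) < 2 * eps.
Proof.
move=> ht hs [t1 t2] [s1 s2]; split.
- apply: le_lt_trans (fmu_symdiff_trans mu (measurable_img ht (mA l))
    (mA jj.1) (measurable_img hs (mA l))) _.
  by rewrite (symdiffC (A _)); lra.
- apply: le_lt_trans (fmu_symdiff_trans mu (measurable_preimg ht (mA l))
    (mA jj.2) (measurable_preimg hs (mA l))) _.
  by rewrite (symdiffC (A _)); lra.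
Qed.

Lemma near_pair_approx {G : topologicalType} (mul : G -> G -> G)
    (T : G -> inv_map X) (eps : R) (N : nat) (y : G) :
  is_action mul mu T -> 0 < eps ->
  exists js : seq (nat * nat),
    \forall g \near y, forall l, (l < N)%N -> pair_approx eps (T g) l (nth (0, 0)%N js l).
Proof.
move=> hT eps0; have eps20 : 0 < eps / 2 by rewrite divr_gt0.
have Ty := action_in_Aut hT y.
suff [js [<- hjs]] : exists js : seq (nat * nat), size js = N /\
    \forall g \near y, forall l, (l < size js)%N ->
      pair_approx eps (T g) l (nth (0, 0)%N js l).
  by exists js.
elim: N => [|N [js [sjs hjs]]]; first by exists [::]; split => //; apply: nearW.
have [j1 Aj1] := dense_approx (measurable_img Ty (mA N)) eps20.
have [j2 Aj2] := dense_approx (measurable_preimg Ty (mA N)) eps20.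
exists (rcons js (j1, j2)); split; first by rewrite size_rcons sjs.
have near1 := near_img_symdiff hT (mA N) y eps20.
have near2 := near_preimg_symdiff hT (mA N) y eps20.
near=> g; have Tg := action_in_Aut hT g.
have old : forall l, (l < size js)%N -> pair_approx eps (T g) l (nth (0, 0)%N js l).
  by near: g.
have c1 : fmu (symdiff (img (T g) (A N)) (img (T y) (A N))) < eps / 2 by near: g.
have c2 : fmu (symdiff (preimg (T g) (A N)) (preimg (T y) (A N))) < eps / 2 by near: g.
move=> l; rewrite size_rcons nth_rcons ltnS leq_eqVlt sjs.
case: ltngtP => [lN _|//|-> _]; first by apply: old; rewrite sjs.
split.
- apply: le_lt_trans (fmu_symdiff_trans mu (measurable_img Tg (mA N))
    (measurable_img Ty (mA N)) (mA j1)) _.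
  lra.
- apply: le_lt_trans (fmu_symdiff_trans mu (measurable_preimg Tg (mA N))
    (measurable_preimg Ty (mA N)) (mA j2)) _.
  lra.
Unshelve. all: by end_near.
Qed.

End DenseFamily.

Section DistanceBounds.
Context {R : realType} {d : measure_display} {X : measurableType d}.
Variable mu : probability X R.
Local Notation fmu := (fmu mu).
Local Notation half_pow := (half_pow R).
Variable A : nat -> set X.
Hypothesis mA : forall i, measurable (A i).
Variables t s : inv_map X.
Hypotheses (ht : in_Aut mu t) (hs : in_Aut mu s).

Lemma dist_d_le N c : 0 <= c ->
  (forall l, (l < N)%N -> fmu (symdiff (img t (A l)) (img s (A l))) +
                          fmu (symdiff (preimg t (A l)) (preimg s (A l))) <= c) ->
  (dist_d mu A t s <= (2 * c + 4 * half_pow N)%:E)%E.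
Proof.
move=> c0 tsc; have -> : 4 = 2 * 2 :> R by lra.
have mI l := measurable_symdiff (measurable_img ht (mA l)) (measurable_img hs (mA l)).
have mP l := measurable_symdiff (measurable_preimg ht (mA l)) (measurable_preimg hs (mA l)).
apply: esum_half_pow_le => // l _ => [|lN]; rewrite !fmuE // -EFinD -EFinM lee_fin.
  by apply: ler_wpM2l; rewrite ?half_pow_ge0 // (lerD (fmu_le1 _ _)) ?fmu_le1.
by apply: ler_wpM2l; [exact: half_pow_ge0|exact: tsc].
Qed.

Lemma dist_a_le N c : 0 <= c ->
  (forall i j, (i < N)%N -> (j < N)%N ->
     `| fmu (img t (A i) `&` A j) - fmu (img s (A i) `&` A j) | <= c) ->
  (dist_a mu A t s <= (4 * c + 12 * half_pow N)%:E)%E.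
Proof.
move=> c0 tsc; have mI u i j : in_Aut mu u -> measurable (img u (A i) `&` A j).
  by move=> hu; apply: measurableI; [exact (measurable_img hu (mA i))|exact: mA].
rewrite /dist_a (eq_esum (b := fun ij => (half_pow (ij.1 + ij.2) *
  `| fmu (img t (A ij.1) `&` A ij.2) - fmu (img s (A ij.1) `&` A ij.2) |)%:E)).
  apply: (esum_half_pow2_le (x := fun i j =>
    `| fmu (img t (A i) `&` A j) - fmu (img s (A i) `&` A j) |)) => // i j.
  have /andP[? ?] : 0 <= fmu (img t (A i) `&` A j) <= 1.
    by rewrite fmu_ge0 (fmu_le1 _ (mI _ i j ht)).
  have /andP[? ?] : 0 <= fmu (img s (A i) `&` A j) <= 1.
    by rewrite fmu_ge0 (fmu_le1 _ (mI _ i j hs)).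
  by rewrite normr_ge0 ler_norml; apply/andP; split; lra.
move=> [i j] _ /=; rewrite (fmuE _ (mI _ i j ht)) (fmuE _ (mI _ i j hs)).
by rewrite -EFinB abse_EFin -EFinM.
Qed.

End DistanceBounds.

Section Patterns.
Context {R : realType} {d : measure_display} {X : measurableType d}.
Variable mu : probability X R.
Local Notation fmu := (fmu mu).
Local Notation half_pow := (half_pow R).
Variable A : nat -> set X.
Hypothesis mA : forall i, measurable (A i).
Hypothesis Adense : forall B : set X, measurable B -> forall eps : R, 0 < eps ->
  exists i, (mu (symdiff (A i) B) < eps%:E)%E.
Context {G : topologicalType} (mul : G -> G -> G).
Variables (I : set nat) (K : nat -> set G) (Gam : set G).
Hypothesis cK : forall i, I i -> compact (K i).
Variables (J : eqType) (b : J -> set G).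
Hypothesis ob : forall j, open (b j).
Hypothesis b_basis : forall y O, nbhs y O -> exists j, b j y /\ b j `<=` O.

(* A cell [(j, js)] pairs the basic open set [b j] with indices [js`_l]
   of the sets [A _] approximating the images of [A l] on [b j]. *)
Definition covered (L : seq (J * seq (nat * nat))) (g : G) :=
  exists2 c, c \in L & b c.1 g.

Definition good_cell k (T : G -> inv_map X) (c : J * seq (nat * nat)) :=
  forall g, b c.1 g -> forall l, (l < k)%N ->
    pair_approx mu A (half_pow k) (T g) l (nth (0, 0)%N c.2 l).

Definition fits k L T := [/\ forall c, c \in L -> good_cell k T c,
  forall i, I i -> (i < k)%N -> K i `<=` covered L &
  forall g, Gam g -> ~ covered L g -> forall i j, (i < k)%N -> (j < k)%N ->
    `| fmu (img (T g) (A i) `&` A j) - fmu (A i) * fmu (A j) | < half_pow k ].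

Lemma exists_good_cell k T y : is_action mul mu T ->
  exists2 c, good_cell k T c & b c.1 y.
Proof.
move=> hT; have [js near_js] := near_pair_approx mA Adense k y hT (half_pow_gt0 R k).
by have [j [bjy /= bj_js]] := b_basis near_js; exists (j, js) => // g /bj_js.
Qed.

Lemma compact_good_cover k T C : is_action mul mu T -> compact C ->
  exists2 L : seq (J * seq (nat * nat)),
    (forall c, c \in L -> good_cell k T c) & C `<=` covered L.
Proof.
move=> hT cC; have [|L Lgood CL] :=
  compact_finite_subcover (P := good_cell k T) cC (fun c => ob c.1).
  by move=> y _; have [c] := exists_good_cell k y hT; exists c.
exists L => [c /Lgood|y /CL [c]]; [exact: set_mem|by exists c].
Qed.

Lemma fits_exists k T : is_mixing mul mu Gam T ->
  exists L : seq (J * seq (nat * nat)), fits k L T.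
Proof.
move=> [hT Tmix].
have [Cmix hCmix] := choice (fun p : nat * nat =>
  Tmix _ _ (mA p.1) (mA p.2) _ (half_pow_gt0 R k)).
pose ks := iota 0 k.
pose C := \big[setU/set0]_(i <- ks | `[< I i >]) K i `|`
          \big[setU/set0]_(i <- ks) \big[setU/set0]_(j <- ks) Cmix (i, j).
have cC : compact C.
  apply: compactU; apply: bigsetU_compact => i.
    by move=> /asboolP; exact: cK.
  by move=> _; apply: bigsetU_compact => j _; exact: (hCmix (i, j)).1.
have [L Lgood CL] := compact_good_cover k hT cC.
exists L; split => //.
  move=> i Ii ik y Kiy; apply: CL; left; rewrite -bigcup_seq_cond.
  by exists i => //=; rewrite mem_iota ik; exact/asboolP.
move=> g Gg gL i j ik jk; apply: (hCmix (i, j)).2 => // Cg; apply/gL/CL; right.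
rewrite -bigcup_seq; exists i; rewrite /= ?mem_iota //=.
by rewrite -bigcup_seq; exists j; rewrite /= ?mem_iota.
Qed.

Section TwoFits.
Variables (k : nat) (L : seq (J * seq (nat * nat))) (T S : G -> inv_map X).
Hypotheses (hT : is_action mul mu T) (hS : is_action mul mu S).
Hypotheses (fitT : fits k L T) (fitS : fits k L S).
Local Notation w := (half_pow k).

Lemma fits_covered_close g : covered L g -> forall l, (l < k)%N ->
  fmu (symdiff (img (T g) (A l)) (img (S g) (A l))) < 2 * w /\
  fmu (symdiff (preimg (T g) (A l)) (preimg (S g) (A l))) < 2 * w.
Proof.
case: fitT fitS => [Tgood _ _] [Sgood _ _] [c cL bcg] l lk.
exact: pair_approx_close (action_in_Aut hT g) (action_in_Aut hS g)
  (Tgood c cL g bcg l lk) (Sgood c cL g bcg l lk).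
Qed.

Lemma fits_dist_d_covered g : covered L g -> (dist_d mu A (T g) (S g) <= (12 * w)%:E)%E.
Proof.
move=> gL; have Tg := action_in_Aut hT g; have Sg := action_in_Aut hS g.
apply: le_trans (dist_d_le mA Tg Sg (c := 4 * w) _ _) _.
- by rewrite mulr_ge0 ?half_pow_ge0.
- by move=> l lk; have [] := fits_covered_close gL lk; lra.
- by rewrite lee_fin; lra.
Qed.

Lemma fits_dist_a g : Gam g -> (dist_a mu A (T g) (S g) <= (20 * w)%:E)%E.
Proof.
move=> Gg; have Tg := action_in_Aut hT g; have Sg := action_in_Aut hS g.
apply: le_trans (dist_a_le mA Tg Sg (c := 2 * w) _ _) _.
- by rewrite mulr_ge0 ?half_pow_ge0.
- move=> i j ik jk; have [gL|gL] := pselect (covered L g).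
    have [close _] := fits_covered_close gL ik.
    apply: le_trans (fmuI_symdiff mu (measurable_img Tg (mA i))
      (measurable_img Sg (mA i)) (mA j)) _.
    lra.
  case: fitT fitS => [_ _ Tmix] [_ _ Smix].
  have := Tmix g Gg gL i j ik jk; have := Smix g Gg gL i j ik jk.
  by rewrite !ltr_norml ler_norml => /andP[? ?] /andP[? ?]; apply/andP; split; lra.
- by rewrite lee_fin; lra.
Qed.

Lemma fits_dist_m : (dist_m mu Gam A I K T S <= (52 * w)%:E)%E.
Proof.
have w0 := half_pow_ge0 R k.
have -> : 52 * w = 32 * w + 20 * w by ring.
rewrite /dist_m EFinD; apply: leeD; last first.
  by apply: ge_ereal_sup => _ [g Gg <-]; exact: fits_dist_a.
apply: le_trans (@esum_half_pow_le R _ _ (12 * w) 4 k _ _ _ _) _.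
- by rewrite mulr_ge0.
- by [].
- move=> i _; rewrite EFinM lee_wpmul2l ?lee_fin ?half_pow_ge0 //.
  apply: ge_ereal_sup => _ [g _ <-].
  have Tg := action_in_Aut hT g; have Sg := action_in_Aut hS g.
  apply: le_trans (dist_d_le mA Tg Sg (N := 0) (c := 0) _ _) _.
  + by [].
  + by [].
  + by rewrite lee_fin half_pow0; lra.
- move=> i Ii ik; rewrite EFinM lee_wpmul2l ?lee_fin ?half_pow_ge0 //.
  apply: ge_ereal_sup => _ [g Kig <-]; apply: fits_dist_d_covered.
  by case: fitT => _ cover _; exact: cover i Ii ik g Kig.
- by rewrite lee_fin; lra.
Qed.

End TwoFits.

End Patterns.

(* Choosing one element of [M] in each nonempty [M `&` P k i] gives a
   countable dense subset. *)
Lemma separable_of_countable_fine_covers {T : Type} {R : realType} (x0 : T)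
    (M : set T) (dist : T -> T -> \bar R) (Idx : countType) (P : nat -> Idx -> set T) :
  (forall k x, M x -> exists i, P k i x) ->
  (forall eps, 0 < eps -> exists k, forall i x y,
     M x -> M y -> P k i x -> P k i y -> (dist x y < eps%:E)%E) ->
  exists D : set T, [/\ countable D, D `<=` M &
    forall x, M x -> forall eps, 0 < eps -> exists2 y, D y & (dist x y < eps%:E)%E].
Proof.
move=> Pcover Psmall.
pose pick (p : nat * Idx) :=
  if pselect (exists y, M y /\ P p.1 p.2 y) is left h then projT1 (cid h) else x0.
have pickP p : (exists y, M y /\ P p.1 p.2 y) -> M (pick p) /\ P p.1 p.2 (pick p).
  by rewrite /pick; case: pselect => // h _; exact: projT2 (cid h).
exists (M `&` range pick); split; [|exact: subIsetl|].
  apply: (sub_countable _ (countableP [set: nat * Idx])).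
  exact: card_le_trans (subset_card_le (@subIsetr _ M _)) (card_image_le _ _).
move=> x Mx eps eps0; have [k small] := Psmall _ eps0.
have [i Pkix] := Pcover k x Mx; have [My Py] := pickP (k, i) (ex_intro _ x (conj Mx Pkix)).
by exists (pick (k, i)); [split => //; exists (k, i)|exact: small Py].
Qed.

Theorem mainTheorem5
  (R : realType) (d : measure_display) (X : measurableType d)
  (mu : probability X R)
  (HX : nonatomic_lebesgue_space mu)
  (A : nat -> set X) (mA : forall i, measurable (A i))
  (Agen : forall B : set X, measurable B ->
            exists C, <<s range A >> C /\ mu (symdiff B C) = 0%E)
  (Adense : forall B : set X, measurable B -> forall eps : R, 0 < eps ->
              exists i, (mu (symdiff (A i) B) < eps%:E)%E)
  (G : topologicalType) (mul : G -> G -> G) (inv : G -> G) (e : G)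
  (HG : lc_group mul inv e)
  (I : set nat) (K : nat -> set G)
  (HK : forall i, I i -> compact (K i) /\ interior (K i) !=set0)
  (HKgen : generates mul inv e (\bigcup_(i in I) K i))
  (Gam : set G) (HGam : forall C : set G, compact C -> ~ (Gam `<=` C)) :
  exists D : set (G -> inv_map X),
    [/\ countable D,
        D `<=` is_mixing mul mu Gam &
        forall T, is_mixing mul mu Gam T ->
        forall eps : R, 0 < eps ->
        exists2 S, D S & (dist_m mu Gam A I K T S < eps%:E)%E ].
Proof.
have cK i (Ii : I i) := (HK i Ii).1.
have [q qdense] := generated_dense_words HG cK HKgen.
have [b [ob b_basis]] := dense_countable_basis HG qdense.
apply: (separable_of_countable_fine_covers (fun=> InvMap id id)
  (P := fits mu A I K Gam b)).
  by move=> k; exact (fits_exists mA Adense cK ob b_basis k).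
move=> eps eps0; have [k wk] := half_pow_small (divr_gt0 eps0 (ltr0Sn R 51)).
exists k => L T S [hT _] [hS _] fitT fitS.
apply: le_lt_trans (fits_dist_m mA hT hS fitT fitS) _.
by rewrite lte_fin; lra.
Qed.
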